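(* Let $(\mathcal A,(p_n)_{n\in\mathbb N})$ and $(\mathcal B,(q_m)_{m\in\mathbb N})$ be Fréchet algebras and let $\varphi:\mathcal A\to\mathcal B$ be a continuous homomorphism with dense range. Let $I$ be a closed ideal of $\mathcal A$ and $J$ a closed ideal of $\mathcal B$ such that $\varphi(I)\subseteq J$. If $\mathcal A$ has a locally bounded approximate diagonal modulo $I$, then $\mathcal B$ has a locally bounded approximate diagonal modulo $J$.
   Context: A Fréchet algebra $(\mathcal A,(p_n))$ is a complete Hausdorff topological algebra whose topology is given by an increasing sequence $p_1\le p_2\le\cdots$ of submultiplicative seminorms. For a closed ideal $I$ of $\mathcal A$, $\mathcal A/I$ is a Fréchet algebra with seminorms $\hat p_n(a+I)=\inf\{p_n(a+b):b\in I\}$; write $\tilde a=a+I$. Let $\frac{\mathcal A}{I}\widehat\otimes\frac{\mathcal A}{I}$ be the completed projective tensor product, with seminorms $\hat r_n(M)=\inf\{\sum_i \hat p_n(x_i)\hat p_n(y_i): M=\sum_i x_i\otimes y_i\}$. It is an $\mathcal A$-bimodule via $a\cdot((b+I)\otimes(c+I))=(ab+I)\otimes(c+I)$ and $((b+I)\otimes(c+I))\cdot a=(b+I)\otimes(ca+I)$; $\mathcal A$ acts on $\mathcal A/I$ by $a\cdot(b+I)=ab+I$. The diagonal map $\pi_{\mathcal A/I}:\frac{\mathcal A}{I}\widehat\otimes\frac{\mathcal A}{I}\to\frac{\mathcal A}{I}$ is the continuous linear map with $(b+I)\otimes(c+I)\mapsto bc+I$. $\mathcal A$ has a locally bounded approximate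 diagonal modulo $I$ if there exist positive reals $C_n$ ($n\in\mathbb N$) such that for every finite set $F\subseteq\mathcal A\setminus I$, every $n\in\mathbb N$ and every $\varepsilon>0$ there is $M\in\frac{\mathcal A}{I}\widehat\otimes\frac{\mathcal A}{I}$ with $\hat r_n(M)\le C_n$, $\hat r_n(a\cdot M-M\cdot a)<\varepsilon$ for all $a\in F$, and $\hat p_n(a\cdot\pi_{\mathcal A/I}(M)-\tilde a)<\varepsilon$ for all $a\in\mathcal A$. The analogous notions are used for $\mathcal B$, $J$ and the seminorms $q_m$. *)

From HB Require Import structures.
From mathcomp Require Import all_boot all_order all_algebra.
From mathcomp Require Import all_classical all_reals all_analysis.
From mathcomp Require Import complex.

Set Implicit Arguments.
Unset Strict Implicit.
Unset Printing Implicit Defensive.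

Import Order.TTheory GRing.Theory Num.Theory.
Import numFieldNormedType.Exports.
Local Open Scope classical_set_scope.
Local Open Scope ring_scope.

(* Throughout: R is the real field, complex R = R[i] the scalar field.
   An algebra is an lmodType over R[i] together with an explicit
   (not necessarily unital) associative bilinear multiplication. *)

Definition is_seminorm (R : realType) (V : lmodType R[i]) (p : V -> R) : Prop :=
  [/\ (forall x, 0 <= p x),
      (forall x y, p (x + y) <= p x + p y) &
      (forall (k : R[i]) x, ((p (k *: x))%:C = `|k| * (p x)%:C)%C)].

Definition sn_cauchy (R : realType) (V : lmodType R[i]) (p : nat -> V -> R)
    (u : nat -> V) : Prop :=
  forall n (eps : R), 0 < eps -> exists N : nat,
    forall k l, (N <= k)%N -> (N <= l)%N -> p n (u k - u l) < eps.

Definition sn_converges (R : realType) (V : lmodType R[i]) (p : nat -> V -> R)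
    (u : nat -> V) (x : V) : Prop :=
  forall n (eps : R), 0 < eps -> exists N : nat,
    forall k, (N <= k)%N -> p n (u k - x) < eps.

Record frechet_algebra (R : realType) (V : lmodType R[i]) (mul : V -> V -> V)
    (p : nat -> V -> R) : Prop := FrechetAlgebra {
  fa_mulA : forall x y z, mul x (mul y z) = mul (mul x y) z;
  fa_mulDl : forall (k : R[i]) x y z, mul (k *: x + y) z = k *: mul x z + mul y z;
  fa_mulDr : forall (k : R[i]) x y z, mul x (k *: y + z) = k *: mul x y + mul x z;
  fa_seminorm : forall n, is_seminorm (p n);
  fa_submult : forall n x y, p n (mul x y) <= p n x * p n y;
  fa_incr : forall n x, p n x <= p n.+1 x;
  fa_hausdorff : forall x, (forall n, p n x = 0) -> x = 0;
  fa_complete : forall u, sn_cauchy p u -> exists x, sn_converges p u x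
}.

Definition closed_ideal (R : realType) (V : lmodType R[i]) (mul : V -> V -> V)
    (p : nat -> V -> R) (I : set V) : Prop :=
  [/\ I 0,
      (forall (k : R[i]) x y, I x -> I y -> I (k *: x + y)),
      (forall a x, I x -> I (mul a x) /\ I (mul x a)) &
      (forall x, (forall n (eps : R), 0 < eps -> exists y, I y /\ p n (x - y) < eps)
                 -> I x)].

Definition continuous_hom (R : realType) (V W : lmodType R[i])
    (mulV : V -> V -> V) (mulW : W -> W -> W)
    (p : nat -> V -> R) (q : nat -> W -> R) (phi : V -> W) : Prop :=
  [/\ (forall (k : R[i]) x y, phi (k *: x + y) = k *: phi x + phi y),
      (forall x y, phi (mulV x y) = mulW (phi x) (phi y)) &
      (forall x m (eps : R), 0 < eps -> exists n (delta : R), 0 < delta /\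
         forall y, p n (y - x) < delta -> q m (phi y - phi x) < eps)].

Definition dense_range (R : realType) (V W : lmodType R[i])
    (q : nat -> W -> R) (phi : V -> W) : Prop :=
  forall (b : W) m (eps : R), 0 < eps -> exists a : V, q m (b - phi a) < eps.

Definition qsn (R : realType) (V : lmodType R[i]) (p : nat -> V -> R)
    (I : set V) (n : nat) (x : V) : R :=
  inf [set p n (x + b) | b in I].

(** Elements of the algebraic tensor product (A/I) ⊗ (A/I) are represented by
    finite formal sums  sum_i (x_i + I) ⊗ (y_i + I), given by sequences of
    pairs (x_i, y_i) of representatives. *)
Definition bilinear_form (R : realType) (V : lmodType R[i]) (f : V -> V -> R[i])
  : Prop :=
  (forall (k : R[i]) x y z, f (k *: x + y) z = k * f x z + f y z) /\
  (forall (k : R[i]) x y z, f x (k *: y + z) = k * f x y + f x z).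

(* two formal sums represent the same element of (A/I) ⊗ (A/I): they agree
   under every bilinear form on (A/I) x (A/I) (universal property) *)
Definition tensor_eq (R : realType) (V : lmodType R[i]) (I : set V)
    (s t : seq (V * V)) : Prop :=
  forall f : V -> V -> R[i], bilinear_form f ->
    (forall x y, I x -> f x y = 0) -> (forall x y, I y -> f x y = 0) ->
    \sum_(z <- s) f z.1 z.2 = \sum_(z <- t) f z.1 z.2.

Definition rsn (R : realType) (V : lmodType R[i]) (p : nat -> V -> R)
    (I : set V) (n : nat) (s : seq (V * V)) : R :=
  inf [set \sum_(z <- t) qsn p I n z.1 * qsn p I n z.2 | t in tensor_eq I s].

Definition tsub (R : realType) (V : lmodType R[i]) (s t : seq (V * V))
  : seq (V * V) := s ++ [seq (- z.1, z.2) | z <- t].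

Definition tlact (R : realType) (V : lmodType R[i]) (mul : V -> V -> V)
    (a : V) (s : seq (V * V)) : seq (V * V) := [seq (mul a z.1, z.2) | z <- s].
Definition tract (R : realType) (V : lmodType R[i]) (mul : V -> V -> V)
    (s : seq (V * V)) (a : V) : seq (V * V) := [seq (z.1, mul z.2 a) | z <- s].

(* diagonal map, returning a representative in A of the class in A/I *)
Definition tpi (R : realType) (V : lmodType R[i]) (mul : V -> V -> V)
    (s : seq (V * V)) : V := \sum_(z <- s) mul z.1 z.2.

(** Elements of the completion  (A/I) \hat⊗ (A/I): Cauchy sequences of
    algebraic tensors for the seminorms \hat r_n. *)
Definition tensor_cauchy (R : realType) (V : lmodType R[i]) (p : nat -> V -> R)
    (I : set V) (M : nat -> seq (V * V)) : Prop :=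
  forall n (eps : R), 0 < eps -> exists N : nat,
    forall k l, (N <= k)%N -> (N <= l)%N -> rsn p I n (tsub (M k) (M l)) < eps.

(** locally bounded approximate diagonal modulo I.  Seminorms / maps on the
    completion are the continuous extensions, i.e. limits along the Cauchy
    sequence. *)
Definition lb_approx_diag_mod (R : realType) (V : lmodType R[i])
    (mul : V -> V -> V) (p : nat -> V -> R) (I : set V) : Prop :=
  exists C : nat -> R, (forall n, 0 < C n) /\
  forall F : seq V, (forall a, a \in F -> ~ I a) ->
  forall (n : nat) (eps : R), 0 < eps ->
  exists M : nat -> seq (V * V),
    [/\ tensor_cauchy p I M,
        limn (fun k => rsn p I n (M k)) <= C n,
        (forall a, a \in F ->
           limn (fun k => rsn p I n (tsub (tlact mul a (M k)) (tract mul (M k) a)))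
             < eps) &
        (forall a, limn (fun k => qsn p I n (mul a (tpi mul (M k)) - a)) < eps)].

(* Push an approximate diagonal of A forward along phi (x) phi.  Continuity of
   phi gives q_m (phi x) <= K p_n x, which bounds the pushed tensors, their
   commutators and their diagonal images by the corresponding quantities in A.
   For b in B choose a in A with phi a close to b (dense range): the commutator
   of b with the pushed tensor splits into the commutator with b - phi a, small
   because the tensor stays bounded, and the image of the commutator with a;
   the diagonal condition splits the same way.  The only non-formal point is
   that the diagonal map is well defined, hence bounded by the projective
   seminorm, on (A/I) (x) (A/I): a point outside I is separated from I by a
   linear functional f (Zorn), and x, y |-> f (x y) is a bilinear form on A/I. *)

From mathcomp Require Import all_boot all_order all_algebra.
From mathcomp Require Import all_classical all_reals all_analysis.
From mathcomp Require Import complex.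
From mathcomp Require Import ring lra.

Set Implicit Arguments.
Unset Strict Implicit.
Unset Printing Implicit Defensive.

Import Order.TTheory GRing.Theory Num.Theory.
Import numFieldNormedType.Exports.
Local Open Scope classical_set_scope.
Local Open Scope ring_scope.

Section SeparatingFunctional.
Variables (K : fieldType) (V : lmodType K) (I : set V).

Definition lin_closed (S : set V) :=
  forall (k : K) x y, S x -> S y -> S (k *: x + y).

Hypotheses (I0 : I 0) (linI : lin_closed I).
Variable v : V.
Hypothesis nIv : ~ I v.

Lemma maximal_subspace_avoiding : exists H : set V,
  [/\ I `<=` H, lin_closed H, ~ H v &
      forall x, ~ H x -> exists h (k : K), H h /\ v = h + k *: x].
Proof.
(* [I `|` W] rather than [W], so that the union of the empty chain is harmless *)
pose P (W : set V) := lin_closed (I `|` W) /\ ~ (I `|` W) v.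
have [W [[linW nWv] Wmax]] : exists W, P W /\ forall W', W `<` W' -> ~ P W'.
  apply: Zorn_bigcup => F FP Ftot; split; last first.
    by case=> [//|[X FX Xv]]; apply: (FP X FX).2; right.
  have lift Z z : F Z -> (I `|` Z) z -> (I `|` \bigcup_(X in F) X) z.
    by move=> FZ [?|?]; [left|right; exists Z].
  move=> k x y [Ix|[X FX Xx]] [Iy|[Y FY Yy]].
  - by left; apply: linI.
  - by apply: (lift Y) => //; apply: (FP Y FY).1; [left|right].
  - by apply: (lift X) => //; apply: (FP X FX).1; [right|left].
  - have [XY|YX] := Ftot X Y FX FY.
      by apply: (lift Y) => //; apply: (FP Y FY).1; right => //; apply: XY.
    by apply: (lift X) => //; apply: (FP X FX).1; right => //; apply: YX.
exists (I `|` W); split=> // x nWx.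
pose W' := [set y | exists h (k : K), (I `|` W) h /\ y = h + k *: x].
have W'_of h : (I `|` W) h -> W' h by exists h, 0; rewrite scale0r addr0.
have W'E z : (I `|` W') z -> W' z by case=> // Iz; apply: W'_of; left.
have linW' : lin_closed (I `|` W').
  move=> k _ _ /W'E[h1 [k1 [Hh1 ->]]] /W'E[h2 [k2 [Hh2 ->]]]; right.
  exists (k *: h1 + h2), (k * k1 + k2); split; first exact: linW.
  by rewrite scalerDr scalerDl scalerA addrACA.
have WW' : W `<` W'.
  split=> [z Wz|W'W]; first by apply: W'_of; right.
  by apply: nWx; right; apply: W'W; exists 0, 1; split; [left | rewrite add0r scale1r].
have /W'E[h [k [Hh vE]]] : (I `|` W') v.
  by apply: contrapT => nW'v; apply: (Wmax W' WW').
by exists h, k.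
Qed.

Lemma separating_functional : exists lam : V -> K,
  [/\ forall k x y, lam (k *: x + y) = k * lam x + lam y,
      forall x, I x -> lam x = 0 & lam v = 1].
Proof.
have [H [IH linH nHv Hmax]] := maximal_subspace_avoiding.
have H0 : H 0 by apply: IH.
have HZ k x : H x -> H (k *: x) by move=> Hx; have := linH k x 0 Hx H0; rewrite addr0.
have HD x y : H x -> H y -> H (x + y) by move=> Hx /(linH 1 x y Hx); rewrite scale1r.
have coord x : exists c, H (x - c *: v).
  have [Hx|nHx] := pselect (H x); first by exists 0; rewrite scale0r subr0.
  have [h [k [Hh vE]]] := Hmax x nHx.
  have k0 : k != 0 by apply: contra_notN nHv => /eqP k0; rewrite vE k0 scale0r addr0.
  exists k^-1; rewrite vE scalerDr scalerA mulVf // scale1r opprD addrCA subrr addr0.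
  by rewrite -scaleNr; apply: HZ.
have coord_uniq x c c' : H (x - c *: v) -> H (x - c' *: v) -> c = c'.
  move=> Hc Hc'; apply: contra_notP nHv => /eqP cc'.
  have := HZ ((c' - c)^-1) _ (HD _ _ Hc (HZ (-1) _ Hc')).
  rewrite scaleN1r opprB [X in _ *: X]addrC addrA subrK -scalerBl scalerA mulVf ?scale1r //.
  by rewrite subr_eq0 eq_sym.
have [lam Hlam] := choice coord.
exists lam; split=> [k x y|x Ix|].
- apply: (coord_uniq (k *: x + y)) => //.
  have := HD _ _ (HZ k _ (Hlam x)) (Hlam y).
  by rewrite scalerBr scalerA scalerDl opprD addrACA.
- by apply: (coord_uniq x) => //; rewrite scale0r subr0; apply: IH.
- by apply: (coord_uniq v) => //; rewrite scale1r subrr.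
Qed.

End SeparatingFunctional.

Section RealLemmas.
Variable R : realType.

Lemma ler_mul_inf (S : set R) c K : S !=set0 -> 0 <= K ->
  (forall y, S y -> c <= K * y) -> c <= K * inf S.
Proof.
move=> [y0 Sy0] K0 lbS; have [K_eq0|Kneq0] := eqVneq K 0.
  by have := lbS y0 Sy0; rewrite K_eq0 !mul0r.
have Kgt0 : 0 < K by rewrite lt_def Kneq0.
rewrite -ler_pdivrMl //; apply: lb_le_inf; first by exists y0.
by move=> y Sy; rewrite ler_pdivrMl //; apply: lbS.
Qed.

Lemma cvgn_of_cauchy (u : nat -> R) :
  (forall e, 0 < e -> exists N, forall k l, (N <= k)%N -> (N <= l)%N -> u k - u l < e) ->
  cvgn u.
Proof.
move=> cauchy_u; apply/cauchy_cvgP/cauchy_ballP => e e0.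
have [N uN] := cauchy_u e e0; rewrite near_simpl.
exists ([set k | (N <= k)%N], [set k | (N <= k)%N]); first by split; exists N.
move=> [k l] [/= Nk Nl]; rewrite /ball /= ltr_norml -ltrNl opprB.
by rewrite !uN.
Qed.

Lemma ler_limn_affine (u v w : nat -> R) (a b c : R) : cvgn u -> cvgn v -> cvgn w ->
  (forall k, u k <= a * v k + b * w k + c) -> limn u <= a * limn v + b * limn w + c.
Proof.
move=> cu cv cw le_u; apply: (ler_cvg_to cu); last by near=> k; apply: le_u.
apply: cvgD; last exact: cvg_cst.
by apply: cvgD; apply: cvgM => //; apply: cvg_cst.
Unshelve. all: by end_near.
Qed.

Lemma exists_mul_lt (S eps : R) : 0 < eps -> exists2 d, 0 < d & d * S < eps.
Proof.
move=> eps_gt0; have N_gt0 : 0 < `|S| + 1 by rewrite ltr_wpDl.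
exists (eps / (`|S| + 1)); first by rewrite divr_gt0.
rewrite mulrAC ltr_pdivrMr // ltr_pM2l //.
by apply: le_lt_trans (ler_norm S) _; rewrite ltrDl.
Qed.
End RealLemmas.

Section FrechetAlgebra.
Variable R : realType.
Variables (V : lmodType R[i]) (mul : V -> V -> V) (p : nat -> V -> R) (I : set V).
Hypotheses (FA : frechet_algebra mul p) (CI : closed_ideal mul p I).
Implicit Types (n : nat) (a b x y : V) (s t : seq (V * V)).

Lemma sn_ge0 n x : 0 <= p n x.
Proof. by case: (fa_seminorm FA n). Qed.

Lemma ler_snD n x y : p n (x + y) <= p n x + p n y.
Proof. by case: (fa_seminorm FA n). Qed.

Lemma snZ_ge0 n (t : R) x : 0 <= t -> p n (t%:C%C *: x) = t * p n x.
Proof.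
move=> t0; case: (fa_seminorm FA n) => _ _ /(_ t%:C%C x).
by rewrite ger0_norm ?ler0c // -rmorphM => /complexI.
Qed.

Lemma snN n x : p n (- x) = p n x.
Proof.
case: (fa_seminorm FA n) => _ _ /(_ (-1) x).
by rewrite scaleN1r normrN normr1 mul1r => /complexI.
Qed.

Lemma sn0 n : p n 0 = 0.
Proof. by have := @snZ_ge0 n 0 0 (lexx _); rewrite mul0r scaler0. Qed.

Lemma ideal_lin : lin_closed I.
Proof. by case: CI. Qed.

Lemma ideal0 : I 0.
Proof. by case: CI. Qed.

Lemma idealD x y : I x -> I y -> I (x + y).
Proof. by move=> Ix /(ideal_lin 1 Ix); rewrite scale1r. Qed.

Lemma idealN x : I x -> I (- x).
Proof. by move=> Ix; have := ideal_lin (-1) Ix ideal0; rewrite scaleN1r addr0. Qed.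

Lemma ideal_mull a x : I x -> I (mul a x).
Proof. by case: CI => _ _ + _ => /[apply] /(_ a) []. Qed.

Lemma ideal_mulr a x : I x -> I (mul x a).
Proof. by case: CI => _ _ + _ => /[apply] /(_ a) []. Qed.

Lemma amulDl x y z : mul (x + y) z = mul x z + mul y z.
Proof. by have := fa_mulDl FA 1 x y z; rewrite !scale1r. Qed.

Lemma amulDr x y z : mul x (y + z) = mul x y + mul x z.
Proof. by have := fa_mulDr FA 1 x y z; rewrite !scale1r. Qed.

Lemma amulNl x z : mul (- x) z = - mul x z.
Proof.
have mul0l : mul 0 z = 0 by apply: (addrI (mul 0 z)); rewrite -amulDl !addr0.
by have := fa_mulDl FA (-1) x 0 z; rewrite !addr0 mul0l addr0 !scaleN1r.
Qed.

Lemma amulNr x z : mul x (- z) = - mul x z.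
Proof.
have mul0r : mul x 0 = 0 by apply: (addrI (mul x 0)); rewrite -amulDr !addr0.
by have := fa_mulDr FA (-1) x z 0; rewrite !addr0 mul0r addr0 !scaleN1r.
Qed.

Lemma amulBl x y z : mul (x - y) z = mul x z - mul y z.
Proof. by rewrite amulDl amulNl. Qed.

Lemma amulBr x y z : mul x (y - z) = mul x y - mul x z.
Proof. by rewrite amulDr amulNr. Qed.

(** * Quotient seminorms *)

Local Notation qsn := (qsn p I).

Lemma qsn_le n x b : I b -> qsn n x <= p n (x + b).
Proof.
move=> Ib; apply: ge_inf; last by exists b.
by exists 0 => _ [c _ <-]; apply: sn_ge0.
Qed.

Lemma qsn_ge_mul n x c (K : R) : 0 <= K ->
  (forall b, I b -> c <= K * p n (x + b)) -> c <= K * qsn n x.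
Proof.
move=> K0 lb; apply: ler_mul_inf => // [|_ [b Ib <-]]; last exact: lb.
by exists (p n (x + 0)), 0 => //; apply: ideal0.
Qed.

Lemma qsn_ge n x c : (forall b, I b -> c <= p n (x + b)) -> c <= qsn n x.
Proof.
by move=> lb; rewrite -[qsn n x]mul1r; apply: qsn_ge_mul => // b /lb; rewrite mul1r.
Qed.

Lemma qsn_ge0 n x : 0 <= qsn n x.
Proof. by apply: qsn_ge => b _; apply: sn_ge0. Qed.

Lemma qsn_le_sn n x : qsn n x <= p n x.
Proof. by have := qsn_le n x ideal0; rewrite addr0. Qed.

Lemma qsn0 n : qsn n 0 = 0.
Proof. by apply/eqP; rewrite eq_le qsn_ge0 andbT -(sn0 n) qsn_le_sn. Qed.

Lemma qsn_le_mod n x y : I (x - y) -> qsn n x <= qsn n y.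
Proof.
move=> Ixy; apply: qsn_ge => b Ib; have Iyx : I (y - x) by rewrite -opprB; apply: idealN.
by have := qsn_le n x (idealD Iyx Ib); rewrite addrCA addrA addrNK.
Qed.

Lemma qsn_eq_mod n x y : I (x - y) -> qsn n x = qsn n y.
Proof.
by move=> Ixy; apply/eqP; rewrite eq_le !qsn_le_mod // -opprB; apply: idealN.
Qed.

Lemma qsnN n x : qsn n (- x) = qsn n x.
Proof.
have le_qsnN y : qsn n (- y) <= qsn n y.
  by apply: qsn_ge => b /idealN /(qsn_le n (- y)); rewrite -opprD snN.
by apply/eqP; rewrite eq_le le_qsnN /= -{1}[x]opprK le_qsnN.
Qed.

Lemma ler_qsnD n x y : qsn n (x + y) <= qsn n x + qsn n y.
Proof.
rewrite -lerBlDl; apply: qsn_ge => b' Ib'.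
rewrite lerBlDl addrC -lerBlDr; apply: qsn_ge => b Ib.
rewrite lerBlDr addrC; apply: le_trans (qsn_le n _ (idealD Ib Ib')) _.
by rewrite addrACA ler_snD.
Qed.

Lemma lerB_qsn n x y : qsn n x - qsn n y <= qsn n (x - y).
Proof. by rewrite lerBlDr; have := ler_qsnD n (x - y) y; rewrite subrK. Qed.

Lemma qsn_mull n a x : qsn n (mul a x) <= p n a * qsn n x.
Proof.
apply: qsn_ge_mul => [|b Ib]; first exact: sn_ge0.
by apply: le_trans (qsn_le n _ (ideal_mull a Ib)) _; rewrite -amulDr (fa_submult FA).
Qed.

Lemma qsn_mulr n a x : qsn n (mul x a) <= qsn n x * p n a.
Proof.
rewrite mulrC; apply: qsn_ge_mul => [|b Ib]; first exact: sn_ge0.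
apply: le_trans (qsn_le n _ (ideal_mulr a Ib)) _.
by rewrite -amulDl mulrC (fa_submult FA).
Qed.

Lemma qsn_mul n x y : qsn n (mul x y) <= qsn n x * qsn n y.
Proof.
rewrite mulrC; apply: qsn_ge_mul => [|b Ib]; first exact: qsn_ge0.
rewrite (@qsn_eq_mod n _ (mul (x + b) y)); first by rewrite mulrC qsn_mull.
by rewrite amulDl opprD addNKr; apply/idealN/ideal_mulr.
Qed.

(** * The projective tensor seminorm *)

Local Notation rsn := (rsn p I).
Local Notation tensor_eq := (tensor_eq I).

Definition teval (f : V -> V -> R[i]) s := \sum_(z <- s) f z.1 z.2.

Definition admissible (f : V -> V -> R[i]) :=
  [/\ bilinear_form f, (forall x y, I x -> f x y = 0) & (forall x y, I y -> f x y = 0)].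

Lemma tensor_eqP s t :
  tensor_eq s t <-> (forall f, admissible f -> teval f s = teval f t).
Proof. by split=> [eq_st f [bf fI1 fI2]|eq_st f bf fI1 fI2]; apply: eq_st. Qed.

Lemma teq_refl s : tensor_eq s s.
Proof. by apply/tensor_eqP. Qed.

Lemma teq_sym s t : tensor_eq s t -> tensor_eq t s.
Proof. by move/tensor_eqP=> eq_st; apply/tensor_eqP => f /eq_st. Qed.

Lemma teq_trans s t u : tensor_eq s t -> tensor_eq t u -> tensor_eq s u.
Proof.
by move=> /tensor_eqP st /tensor_eqP tu; apply/tensor_eqP => f f_adm; rewrite st ?tu.
Qed.

Section AdmissibleForm.
Variable f : V -> V -> R[i].
Hypothesis f_adm : admissible f.

Lemma admDl x y z : f (x + y) z = f x z + f y z.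
Proof. by case: f_adm => -[+ _] _ _ => /(_ 1 x y z); rewrite scale1r mul1r. Qed.

Lemma admDr x y z : f x (y + z) = f x y + f x z.
Proof. by case: f_adm => -[_ +] _ _ => /(_ 1 x y z); rewrite scale1r mul1r. Qed.

Lemma admNl x y : f (- x) y = - f x y.
Proof.
have f0 : f 0 y = 0 by apply: (addrI (f 0 y)); rewrite -admDl !addr0.
by case: f_adm => -[+ _] _ _ => /(_ (-1) x 0 y); rewrite scaleN1r addr0 f0 addr0 mulN1r.
Qed.

Lemma admNr x y : f x (- y) = - f x y.
Proof.
have f0 : f x 0 = 0 by apply: (addrI (f x 0)); rewrite -admDr !addr0.
by case: f_adm => -[_ +] _ _ => /(_ (-1) x y 0); rewrite scaleN1r addr0 f0 addr0 mulN1r.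
Qed.

End AdmissibleForm.

Definition tneg t : seq (V * V) := [seq (- z.1, z.2) | z <- t].

Lemma tsubE s t : tsub s t = s ++ tneg t.
Proof. by []. Qed.

Lemma teval_cat f s t : teval f (s ++ t) = teval f s + teval f t.
Proof. exact: big_cat. Qed.

Lemma teval_neg f t : admissible f -> teval f (tneg t) = - teval f t.
Proof.
by move=> f_adm; rewrite /teval big_map -sumrN; apply: eq_bigr => z _; rewrite admNl.
Qed.

Lemma teval_sub f s t : admissible f -> teval f (tsub s t) = teval f s - teval f t.
Proof. by move=> f_adm; rewrite tsubE teval_cat teval_neg. Qed.

Lemma teval_lact f a s : teval f (tlact mul a s) = teval (fun x y => f (mul a x) y) s.
Proof. exact: big_map. Qed.

Lemma teval_ract f a s : teval f (tract mul s a) = teval (fun x y => f x (mul y a)) s.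
Proof. exact: big_map. Qed.

Lemma admissible_lact f a : admissible f -> admissible (fun x y => f (mul a x) y).
Proof.
case=> -[fl fr] fI1 fI2; split; first split.
- by move=> k x y z; rewrite (fa_mulDr FA) fl.
- by move=> k x y z; rewrite fr.
- by move=> x y /(ideal_mull a); apply: fI1.
- by move=> x y; apply: fI2.
Qed.

Lemma admissible_ract f a : admissible f -> admissible (fun x y => f x (mul y a)).
Proof.
case=> -[fl fr] fI1 fI2; split; first split.
- by move=> k x y z; rewrite fl.
- by move=> k x y z; rewrite (fa_mulDl FA) fr.
- by move=> x y; apply: fI1.
- by move=> x y /(ideal_mulr a); apply: fI2.
Qed.

Lemma teq_cat s s' t t' :
  tensor_eq s s' -> tensor_eq t t' -> tensor_eq (s ++ t) (s' ++ t').
Proof.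
move=> /tensor_eqP ss' /tensor_eqP tt'; apply/tensor_eqP => f f_adm.
by rewrite !teval_cat ss' ?tt'.
Qed.

Lemma teq_neg s s' : tensor_eq s s' -> tensor_eq (tneg s) (tneg s').
Proof.
by move=> /tensor_eqP ss'; apply/tensor_eqP => f f_adm; rewrite !teval_neg ?ss'.
Qed.

Lemma teq_lact a s s' : tensor_eq s s' -> tensor_eq (tlact mul a s) (tlact mul a s').
Proof.
move=> /tensor_eqP ss'; apply/tensor_eqP => f f_adm.
by rewrite !teval_lact ss' //; apply: admissible_lact.
Qed.

Lemma teq_ract a s s' : tensor_eq s s' -> tensor_eq (tract mul s a) (tract mul s' a).
Proof.
move=> /tensor_eqP ss'; apply/tensor_eqP => f f_adm.
by rewrite !teval_ract ss' //; apply: admissible_ract.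
Qed.

Definition rep_sn n t := \sum_(z <- t) qsn n z.1 * qsn n z.2.

Lemma rep_sn_ge0 n t : 0 <= rep_sn n t.
Proof. by apply: sumr_ge0 => z _; apply: mulr_ge0; apply: qsn_ge0. Qed.

Lemma rep_sn_cat n s t : rep_sn n (s ++ t) = rep_sn n s + rep_sn n t.
Proof. exact: big_cat. Qed.

Lemma rep_sn_neg n t : rep_sn n (tneg t) = rep_sn n t.
Proof. by rewrite /rep_sn big_map; apply: eq_bigr => z _; rewrite qsnN. Qed.

Lemma rep_sn_lact n a t : rep_sn n (tlact mul a t) <= p n a * rep_sn n t.
Proof.
rewrite /rep_sn big_map mulr_sumr; apply: ler_sum => z _ /=.
by rewrite mulrA ler_wpM2r ?qsn_ge0 ?qsn_mull.
Qed.

Lemma rep_sn_ract n a t : rep_sn n (tract mul t a) <= p n a * rep_sn n t.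
Proof.
rewrite /rep_sn big_map mulr_sumr; apply: ler_sum => z _ /=.
by rewrite mulrCA ler_wpM2l ?qsn_ge0 // mulrC qsn_mulr.
Qed.

Lemma rsn_le n s t : tensor_eq s t -> rsn n s <= rep_sn n t.
Proof.
move=> st; apply: ge_inf; last by exists t.
by exists 0 => _ [u _ <-]; apply: rep_sn_ge0.
Qed.

Lemma rsn_ge_mul n s c (K : R) : 0 <= K ->
  (forall t, tensor_eq s t -> c <= K * rep_sn n t) -> c <= K * rsn n s.
Proof.
move=> K0 lb; apply: ler_mul_inf => // [|_ [t st <-]]; last exact: lb.
by exists (rep_sn n s), s => //; apply: teq_refl.
Qed.

Lemma rsn_ge n s c : (forall t, tensor_eq s t -> c <= rep_sn n t) -> c <= rsn n s.
Proof.
by move=> lb; rewrite -[rsn n s]mul1r; apply: rsn_ge_mul => // t /lb; rewrite mul1r.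
Qed.

Lemma rsn_ge0 n s : 0 <= rsn n s.
Proof. by apply: rsn_ge => t _; apply: rep_sn_ge0. Qed.

Lemma rsn_teq n s s' : tensor_eq s s' -> rsn n s = rsn n s'.
Proof.
have le_rsn u u' : tensor_eq u u' -> rsn n u <= rsn n u'.
  by move=> uu'; apply: rsn_ge => t u't; apply/rsn_le/(teq_trans uu').
by move=> ss'; apply/eqP; rewrite eq_le !le_rsn //; apply: teq_sym.
Qed.

Lemma ler_rsn_cat n s t : rsn n (s ++ t) <= rsn n s + rsn n t.
Proof.
rewrite -lerBlDl; apply: rsn_ge => t' tt'.
rewrite lerBlDl -lerBlDr; apply: rsn_ge => s' ss'.
by rewrite lerBlDr -rep_sn_cat; apply/rsn_le/teq_cat.
Qed.

Lemma rsn_tneg_le n s : rsn n (tneg s) <= rsn n s.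
Proof. by apply: rsn_ge => t st; rewrite -rep_sn_neg; apply/rsn_le/teq_neg. Qed.

Lemma rsn_lact n a s : rsn n (tlact mul a s) <= p n a * rsn n s.
Proof.
apply: rsn_ge_mul => [|t st]; first exact: sn_ge0.
by apply: le_trans (rep_sn_lact n a t); apply/rsn_le/teq_lact.
Qed.

Lemma rsn_ract n a s : rsn n (tract mul s a) <= p n a * rsn n s.
Proof.
apply: rsn_ge_mul => [|t st]; first exact: sn_ge0.
by apply: le_trans (rep_sn_ract n a t); apply/rsn_le/teq_ract.
Qed.

Lemma lerB_rsn n s t : rsn n s - rsn n t <= rsn n (tsub s t).
Proof.
have s_eq : tensor_eq s (tsub s t ++ t).
  by apply/tensor_eqP => f f_adm; rewrite teval_cat teval_sub // subrK.
by rewrite lerBlDr (rsn_teq n s_eq) ler_rsn_cat.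
Qed.

(** * Commutators and the diagonal map *)

Definition tcomm a s := tsub (tlact mul a s) (tract mul s a).

Lemma teval_tcomm f a s : admissible f -> teval f (tcomm a s) =
  teval (fun x y => f (mul a x) y) s - teval (fun x y => f x (mul y a)) s.
Proof. by move=> f_adm; rewrite teval_sub // teval_lact teval_ract. Qed.

Lemma rsn_tcomm n a s : rsn n (tcomm a s) <= 2 * p n a * rsn n s.
Proof.
apply: le_trans (ler_rsn_cat _ _ _) _.
rewrite -mulrA mulr_natl mulr2n lerD ?rsn_lact //.
exact: le_trans (rsn_tneg_le _ _) (rsn_ract _ _ _).
Qed.

Lemma teq_tcomm_sub a s t : tensor_eq (tsub (tcomm a s) (tcomm a t)) (tcomm a (tsub s t)).
Proof.
apply/tensor_eqP => f f_adm.
have [fl fr] := (admissible_lact a f_adm, admissible_ract a f_adm).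
by rewrite teval_sub // !teval_tcomm // !teval_sub //; ring.
Qed.

Lemma teq_tcommB a b s : tensor_eq (tcomm a s) (tcomm (a - b) s ++ tcomm b s).
Proof.
apply/tensor_eqP => f f_adm; rewrite teval_cat !teval_tcomm //.
rewrite /teval addrACA -opprD -!big_split /=; congr (_ - _); apply: eq_bigr => z _.
  by rewrite amulBl admDl // admNl // subrK.
by rewrite amulBr admDr // admNr // subrK.
Qed.

Lemma rsn_tcomm_ideal n a s : I a -> rsn n (tcomm a s) = 0.
Proof.
move=> Ia; apply/eqP; rewrite eq_le rsn_ge0 andbT.
have -> : 0 = rep_sn n [::] by rewrite /rep_sn big_nil.
apply: rsn_le; apply/tensor_eqP => f [_ fI1 fI2].
rewrite /teval /tcomm big_cat !big_map big_nil /= !big1 ?addr0 // => z _.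
  by apply: fI2; apply: ideal_mull.
by apply: fI1; apply: ideal_mulr.
Qed.

Lemma tpi_sub s t : tpi mul (tsub s t) = tpi mul s - tpi mul t.
Proof.
rewrite tsubE /tpi big_cat big_map -sumrN; congr (_ + _).
by apply: eq_bigr => z _; rewrite amulNl.
Qed.

Lemma qsn_tpi_le n t : qsn n (tpi mul t) <= rep_sn n t.
Proof.
elim: t => [|z t IH]; first by rewrite /tpi /rep_sn !big_nil qsn0.
rewrite /tpi /rep_sn !big_cons; apply: le_trans (ler_qsnD _ _ _) _.
by apply: lerD; [apply: qsn_mul | apply: IH].
Qed.

Lemma tpi_teq s t : tensor_eq s t -> I (tpi mul s - tpi mul t).
Proof.
(* otherwise a functional lam with lam = 0 on I and lam (tpi s - tpi t) = 1
   gives the admissible form lam (x y), which separates s from t *)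
move=> /tensor_eqP st; apply: contrapT => nI.
have [lam [lam_lin lamI lam1]] := separating_functional ideal0 ideal_lin nI.
have lamD x y : lam (x + y) = lam x + lam y.
  by rewrite -[x]scale1r lam_lin mul1r scale1r.
have lamN x : lam (- x) = - lam x.
  by rewrite -scaleN1r -[_ *: x]addr0 lam_lin (lamI _ ideal0) addr0 mulN1r.
have lam_tpi u : lam (tpi mul u) = teval (fun x y => lam (mul x y)) u.
  elim: u => [|z u IH]; first by rewrite /tpi /teval !big_nil lamI //; apply: ideal0.
  by rewrite /tpi /teval !big_cons lamD IH.
have lam_adm : admissible (fun x y => lam (mul x y)).
  split; first split.
  - by move=> k x y z; rewrite (fa_mulDl FA) lam_lin.
  - by move=> k x y z; rewrite (fa_mulDr FA) lam_lin.
  - by move=> x y Ix; apply/lamI/ideal_mulr.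
  - by move=> x y Iy; apply/lamI/ideal_mull.
have : lam (tpi mul s - tpi mul t) = 0 by rewrite lamD lamN !lam_tpi st // subrr.
by rewrite lam1 => /eqP; rewrite oner_eq0.
Qed.

Lemma qsn_tpi n s : qsn n (tpi mul s) <= rsn n s.
Proof.
apply: rsn_ge => t st; rewrite (@qsn_eq_mod n _ (tpi mul t)) ?qsn_tpi_le //.
exact: tpi_teq.
Qed.

Lemma cvgn_lipschitz (f : seq (V * V) -> R) n (L : R) (M : nat -> seq (V * V)) :
  0 <= L -> (forall s t, f s - f t <= L * rsn n (tsub s t)) ->
  tensor_cauchy p I M -> cvgn (fun k => f (M k)).
Proof.
move=> L0 f_lip M_cauchy; apply: cvgn_of_cauchy => e e0.
have [N MN] := M_cauchy n (e / (L + 1)) (divr_gt0 e0 (ltr_wpDl L0 ltr01)).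
exists N => k l Nk Nl; apply: le_lt_trans (f_lip _ _) _.
have r0 := rsn_ge0 n (tsub (M k) (M l)).
have := MN k l Nk Nl; rewrite ltr_pdivlMr; [move=> ?; nra | lra].
Qed.

Lemma cvgn_rsn n M : tensor_cauchy p I M -> cvgn (fun k => rsn n (M k)).
Proof. by apply: (@cvgn_lipschitz (rsn n) n 1) => // s t; rewrite mul1r lerB_rsn. Qed.

Lemma cvgn_rsn_tcomm n a M : tensor_cauchy p I M -> cvgn (fun k => rsn n (tcomm a (M k))).
Proof.
apply: (@cvgn_lipschitz (fun s => rsn n (tcomm a s)) n (2 * p n a)) => [|s t].
  by rewrite mulr_ge0 ?sn_ge0.
apply: le_trans (lerB_rsn _ _ _) _.
by rewrite (rsn_teq n (teq_tcomm_sub a s t)) rsn_tcomm.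
Qed.

Lemma cvgn_qsn_diag n a M :
  tensor_cauchy p I M -> cvgn (fun k => qsn n (mul a (tpi mul (M k)) - a)).
Proof.
apply: (@cvgn_lipschitz (fun s => qsn n (mul a (tpi mul s) - a)) n (p n a)) => [|s t].
  exact: sn_ge0.
apply: le_trans (lerB_qsn _ _ _) _.
rewrite opprB addrA subrK -amulBr -tpi_sub.
exact: le_trans (qsn_mull _ _ _) (ler_wpM2l (sn_ge0 _ _) (qsn_tpi _ _)).
Qed.

Definition approx_diagonal n (C eps : R) (F : seq V) (M : nat -> seq (V * V)) :=
  [/\ tensor_cauchy p I M,
      limn (fun k => rsn n (M k)) <= C,
      (forall a, a \in F -> limn (fun k => rsn n (tcomm a (M k))) < eps) &
      (forall a, limn (fun k => qsn n (mul a (tpi mul (M k)) - a)) < eps)].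

End FrechetAlgebra.

(** * Transport along phi *)

Section Transfer.
Variable R : realType.
Variables (A : lmodType R[i]) (mulA : A -> A -> A) (p : nat -> A -> R) (I : set A).
Variables (B : lmodType R[i]) (mulB : B -> B -> B) (q : nat -> B -> R) (J : set B).
Variable phi : A -> B.
Hypotheses (FA : frechet_algebra mulA p) (FB : frechet_algebra mulB q).
Hypotheses (CIA : closed_ideal mulA p I) (CIB : closed_ideal mulB q J).
Hypotheses (phi_hom : continuous_hom mulA mulB p q phi) (phiIJ : phi @` I `<=` J).
Hypothesis phi_dense : dense_range q phi.
Implicit Types (m n : nat) (x y : A) (s t : seq (A * A)).

Lemma phi_lin k x y : phi (k *: x + y) = k *: phi x + phi y.
Proof. by case: phi_hom. Qed.

Lemma phiM x y : phi (mulA x y) = mulB (phi x) (phi y).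
Proof. by case: phi_hom. Qed.

Lemma phiD x y : phi (x + y) = phi x + phi y.
Proof. by rewrite -[x]scale1r phi_lin !scale1r. Qed.

Lemma phi0 : phi 0 = 0.
Proof. by apply: (addrI (phi 0)); rewrite -phiD !addr0. Qed.

Lemma phiZ k x : phi (k *: x) = k *: phi x.
Proof. by rewrite -[_ *: x]addr0 phi_lin phi0 addr0. Qed.

Lemma phiN x : phi (- x) = - phi x.
Proof. by rewrite -scaleN1r phiZ scaleN1r. Qed.

Lemma phi_ideal x : I x -> J (phi x).
Proof. by move=> Ix; apply: phiIJ; exists x. Qed.

(* continuity at 0 gives [p n x < d -> q m (phi x) < 1]; rescaling x yields K = 2 / d *)
Lemma phi_bounded m : exists n (K : R), 0 < K /\ forall x, q m (phi x) <= K * p n x.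
Proof.
case: phi_hom => _ _ /(_ 0 m 1 ltr01) [n [d [d0 phi_small]]].
have small_scaled (t : R) x : 0 < t -> t * p n x < d -> t * q m (phi x) < 1.
  move=> t0 tx; rewrite -(snZ_ge0 FB) ?ltW //.
  have := phi_small (t%:C%C *: x); rewrite phi0 !subr0 phiZ; apply.
  by rewrite (snZ_ge0 FA) // ltW.
exists n, (2 / d); split => [|x]; first by rewrite divr_gt0.
apply/ler_addgt0Pr => e e0; have px0 := sn_ge0 FA n x.
have de0 : 0 < d * e by rewrite mulr_gt0.
have D0 : 0 < 2 * p n x + d * e by lra.
have tp : d / (2 * p n x + d * e) * p n x < d.
  by rewrite mulrAC ltr_pdivrMr // ltr_pM2l //; lra.
have := small_scaled _ x (divr_gt0 d0 D0) tp.
rewrite mulrAC ltr_pdivrMr // mul1r => /ltW dq.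
by rewrite -(ler_pM2l d0) mulrDr mulrA mulrCA divff ?gt_eqF // mulr1.
Qed.

Lemma qsn_map m n (K : R) : 0 <= K -> (forall x, q m (phi x) <= K * p n x) ->
  forall x, qsn q J m (phi x) <= K * qsn p I n x.
Proof.
move=> K0 phiK x; apply: (qsn_ge_mul CIA) => // b Ib.
by apply: le_trans (qsn_le FB m _ (phi_ideal Ib)) _; rewrite -phiD phiK.
Qed.

Definition tmap s : seq (B * B) := [seq (phi z.1, phi z.2) | z <- s].

Lemma teq_map s t : tensor_eq I s t -> tensor_eq J (tmap s) (tmap t).
Proof.
move=> st f [fl fr] fJ1 fJ2; rewrite /tmap !big_map.
apply: (st (fun x y => f (phi x) (phi y))).
- by split=> k x y z; rewrite phi_lin ?fl ?fr.
- by move=> x y /phi_ideal; apply: fJ1.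
- by move=> x y /phi_ideal; apply: fJ2.
Qed.

Lemma rsn_map m n (K : R) : 0 <= K -> (forall x, q m (phi x) <= K * p n x) ->
  forall s, rsn q J m (tmap s) <= K ^+ 2 * rsn p I n s.
Proof.
move=> K0 phiK s; apply: rsn_ge_mul => [|t st]; first exact: exprn_ge0.
apply: le_trans (rsn_le FB CIB m (teq_map st)) _.
rewrite /rep_sn big_map mulr_sumr; apply: ler_sum => z _ /=.
by rewrite expr2 mulrACA ler_pM ?(qsn_ge0 FB CIB) ?qsn_map.
Qed.

Lemma tmap_sub s t : tmap (tsub s t) = tsub (tmap s) (tmap t).
Proof.
rewrite /tmap /tsub map_cat -!map_comp; congr (_ ++ _).
by apply: eq_map => z /=; rewrite phiN.
Qed.

Lemma tmap_tcomm a s : tmap (tcomm mulA a s) = tcomm mulB (phi a) (tmap s).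
Proof.
rewrite /tcomm tmap_sub /tmap /tlact /tract -!map_comp.
by congr tsub; apply: eq_map => z /=; rewrite phiM.
Qed.

Lemma tpi_map s : tpi mulB (tmap s) = phi (tpi mulA s).
Proof.
elim: s => [|z s IH]; first by rewrite /tpi /tmap !big_nil phi0.
by rewrite /tpi /tmap /= !big_cons phiD phiM -IH.
Qed.

Lemma tensor_cauchy_map M : tensor_cauchy p I M -> tensor_cauchy q J (fun k => tmap (M k)).
Proof.
move=> M_cauchy m e e0; have [n [K [K0 phiK]]] := phi_bounded m.
have [N MN] := M_cauchy n (e / K ^+ 2) (divr_gt0 e0 (exprn_gt0 2 K0)).
exists N => k l Nk Nl; rewrite -tmap_sub.
apply: le_lt_trans (rsn_map (ltW K0) phiK _) _.
by rewrite -ltr_pdivlMl ?exprn_gt0 // mulrC MN.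
Qed.

Section PushedDiagonal.
Variables (m n : nat) (K C d : R) (M : nat -> seq (A * A)).
Hypotheses (K0 : 0 <= K) (phiK : forall x, q m (phi x) <= K * p n x).
Hypotheses (M_cauchy : tensor_cauchy p I M) (M_bd : limn (fun k => rsn p I n (M k)) <= C).

Let M' k := tmap (M k).
Let M'_cauchy : tensor_cauchy q J M' := tensor_cauchy_map M_cauchy.
Let L_ge0 : 0 <= limn (fun k => rsn p I n (M k)).
Proof.
by apply: limr_ge; [apply: (cvgn_rsn FA CIA) | near=> k; apply: (rsn_ge0 FA CIA)].
Unshelve. all: by end_near.
Qed.

Lemma limn_rsn_map : limn (fun k => rsn q J m (M' k)) <= K ^+ 2 * C.
Proof.
apply: le_trans (ler_wpM2l (exprn_ge0 2 K0) M_bd).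
have cv := cvgn_rsn FA CIA (n:=n) M_cauchy.
have := @ler_limn_affine _ _ _ _ (K ^+ 2) 0 0 (cvgn_rsn FB CIB (n:=m) M'_cauchy) cv cv.
by rewrite mul0r !addr0; apply=> k; rewrite mul0r !addr0 rsn_map.
Qed.

Lemma limn_rsn_tcomm_map b a : q m (b - phi a) <= d ->
  limn (fun k => rsn p I n (tcomm mulA a (M k))) <= d ->
  limn (fun k => rsn q J m (tcomm mulB b (M' k))) <= d * (2 * K ^+ 2 * C + K ^+ 2).
Proof.
move=> ba_d comm_d.
apply: le_trans (@ler_limn_affine _ _ _ _ (2 * q m (b - phi a) * K ^+ 2) (K ^+ 2) 0
  (cvgn_rsn_tcomm FB CIB (n:=m) (a:=b) M'_cauchy) (cvgn_rsn FA CIA (n:=n) M_cauchy)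
  (cvgn_rsn_tcomm FA CIA (n:=n) (a:=a) M_cauchy) _) _.
  move=> k; rewrite addr0 (rsn_teq FB CIB m (teq_tcommB FB b (phi a) (M' k))).
  apply: le_trans (ler_rsn_cat FB CIB _ _ _) _; apply: lerD.
    apply: le_trans (rsn_tcomm FB CIB _ _ _) _.
    rewrite -[X in _ <= X]mulrA; apply: ler_wpM2l; last exact: rsn_map.
    by rewrite mulr_ge0 ?(sn_ge0 FB).
  by rewrite /M' -tmap_tcomm rsn_map.
have qL : q m (b - phi a) * limn (fun k => rsn p I n (M k)) <= d * C.
  by rewrite ler_pM ?(sn_ge0 FB) ?L_ge0.
have K2_ge0 := exprn_ge0 2 K0.
have := ler_wpM2l K2_ge0 qL; have := ler_wpM2l K2_ge0 comm_d; lra.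
Qed.

Lemma limn_qsn_diag_map b a : q m (b - phi a) <= d ->
  limn (fun k => qsn p I n (mulA a (tpi mulA (M k)) - a)) <= d ->
  limn (fun k => qsn q J m (mulB b (tpi mulB (M' k)) - b)) <= d * (K * C + K + 1).
Proof.
move=> ba_d diag_d.
apply: le_trans (@ler_limn_affine _ _ _ _ (q m (b - phi a) * K) K (q m (phi a - b))
  (cvgn_qsn_diag FB CIB (n:=m) (a:=b) M'_cauchy) (cvgn_rsn FA CIA (n:=n) M_cauchy)
  (cvgn_qsn_diag FA CIA (n:=n) (a:=a) M_cauchy) _) _.
  move=> k; rewrite /M' tpi_map; set x := tpi mulA (M k).
  have -> : mulB b (phi x) - b =
      mulB (b - phi a) (phi x) + phi (mulA a x - a) + (phi a - b).
    by rewrite (amulBl FB) phiD phiN phiM !addrA !subrK.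
  apply: le_trans (ler_qsnD FB CIB _ _ _) _; apply: lerD; last exact: (qsn_le_sn FB CIB).
  apply: le_trans (ler_qsnD FB CIB _ _ _) _; apply: lerD; last exact: qsn_map.
  apply: le_trans (qsn_mull FB CIB _ _ _) _.
  rewrite -mulrA; apply: ler_wpM2l; first exact: (sn_ge0 FB).
  exact: le_trans (qsn_map K0 phiK x) (ler_wpM2l K0 (qsn_tpi FA CIA _ _)).
have qL : q m (b - phi a) * limn (fun k => rsn p I n (M k)) <= d * C.
  by rewrite ler_pM ?(sn_ge0 FB) ?L_ge0.
have := ler_wpM2l K0 qL; have := ler_wpM2l K0 diag_d.
rewrite -[phi a - b]opprB (snN FB); lra.
Qed.

End PushedDiagonal.

Lemma approx_diagonal_map m n (K C : R) :
  0 < K -> (forall x, q m (phi x) <= K * p n x) -> 0 <= C ->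
  (forall F, (forall a, a \in F -> ~ I a) -> forall eps, 0 < eps ->
     exists M, approx_diagonal mulA p I n C eps F M) ->
  forall F eps, 0 < eps -> exists M, approx_diagonal mulB q J m (K ^+ 2 * C) eps F M.
Proof.
move=> K_gt0 phiK C_ge0 diagA F eps eps_gt0; have K_ge0 := ltW K_gt0.
pose S1 := 2 * K ^+ 2 * C + K ^+ 2; pose S2 := K * C + K + 1.
have [S1_ge0 S2_ge0] : 0 <= S1 /\ 0 <= S2.
  by split; rewrite /S1 /S2 !addr_ge0 ?mulr_ge0 ?exprn_ge0.
have [d d_gt0 dS] := exists_mul_lt (S1 + S2) eps_gt0; have d_ge0 := ltW d_gt0.
have /choice[approx approxP] b : exists a, q m (b - phi a) < d := phi_dense b m d_gt0.
(* [diagA] only covers elements outside I; for a in I the commutator vanishes *)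
pose G := [seq a <- map approx F | `[< ~ I a >]].
have G_notI a : a \in G -> ~ I a by rewrite mem_filter => /andP[/asboolP].
have [M [M_cauchy M_bd M_comm M_diag]] := diagA G G_notI d d_gt0.
exists (fun k => tmap (M k)); split.
- exact: tensor_cauchy_map.
- exact: limn_rsn_map.
- move=> b Fb; set a := approx b.
  have comm_d : limn (fun k => rsn p I n (tcomm mulA a (M k))) <= d.
    have [Ia|nIa] := pselect (I a).
      by under eq_fun do rewrite (rsn_tcomm_ideal FA CIA n _ Ia); rewrite lim_cst.
    have aG : a \in G.
      by rewrite mem_filter; apply/andP; split; [apply/asboolP | apply: map_f].
    exact: ltW (M_comm a aG).
  apply: le_lt_trans
    (limn_rsn_tcomm_map K_ge0 phiK M_cauchy M_bd (ltW (approxP b)) comm_d) _.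
  by apply: le_lt_trans dS; apply: ler_wpM2l; rewrite ?lerDl.
- move=> b; have [a ab] := phi_dense b m d_gt0.
  apply: le_lt_trans
    (limn_qsn_diag_map K_ge0 phiK M_cauchy M_bd (ltW ab) (ltW (M_diag a))) _.
  by apply: le_lt_trans dS; apply: ler_wpM2l; rewrite ?lerDr.
Qed.

End Transfer.

Theorem theorem2p3 (R : realType)
    (A : lmodType R[i]) (mulA : A -> A -> A) (p : nat -> A -> R)
    (B : lmodType R[i]) (mulB : B -> B -> B) (q : nat -> B -> R)
    (phi : A -> B) (I : set A) (J : set B) :
  frechet_algebra mulA p ->
  frechet_algebra mulB q ->
  continuous_hom mulA mulB p q phi ->
  dense_range q phi ->
  closed_ideal mulA p I ->
  closed_ideal mulB q J ->
  phi @` I `<=` J ->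
  lb_approx_diag_mod mulA p I ->
  lb_approx_diag_mod mulB q J.
Proof.
move=> FA FB phi_hom phi_dense CIA CIB phiIJ [C [C_gt0 diagA]].
have /choice[n_ /choice[K_ phi_bd]] := phi_bounded FA FB phi_hom.
exists (fun m => K_ m ^+ 2 * C (n_ m)); split.
  by move=> m; have [K_gt0 _] := phi_bd m; rewrite mulr_gt0 ?exprn_gt0.
move=> F _ m eps eps_gt0; have [K_gt0 phiK] := phi_bd m.
apply: (approx_diagonal_map FA FB CIA CIB phi_hom phiIJ phi_dense K_gt0 phiK) => //.
  exact: ltW.
by move=> G G_notI; apply: diagA.
Qed.
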